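(* Let $k$ be a field and $A$ an integral domain that is a $k$-algebra, equipped with $k$-linear derivations $\delta_1,\ldots,\delta_m$. Suppose there is a finite-dimensional $k$-vector subspace $V$ of $A$ and a set $\mathcal S$ of ideals of $A$ such that (i) $\delta_i(I)\subseteq I$ for all $i=1,\ldots,m$ and all $I\in\mathcal S$; (ii) $\bigcap\mathcal S=(0)$; (iii) $V\cap I\neq(0)$ for all $I\in\mathcal S$. Then there exists $f\in\operatorname{Frac}(A)\setminus k$ with $\delta_i(f)=0$ for all $i=1,\ldots,m$.
   Context: All algebras are commutative. The derivations are extended to $\operatorname{Frac}(A)$ by the quotient rule. *)

From HB Require Import structures.
From mathcomp Require Import all_boot all_order all_algebra.
From mathcomp Require Import generic_quotient fraction.
Set Implicit Arguments. Unset Strict Implicit. Unset Printing Implicit Defensive.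
Import GRing.Theory.
Local Open Scope ring_scope.

(* A commutative k-algebra structure on the integral domain A is given by the
   structure map phi : k -> A (a ring morphism). *)

Definition is_kderivation (k : fieldType) (A : idomainType)
    (phi : {rmorphism k -> A}) (d : A -> A) : Prop :=
  [/\ forall x y : A, d (x + y) = d x + d y,
      forall (c : k) (x : A), d (phi c * x) = phi c * d x
    & forall x y : A, d (x * y) = d x * y + x * d y].

Definition is_ideal (A : idomainType) (I : A -> Prop) : Prop :=
  [/\ I 0, forall x y, I x -> I y -> I (x + y)
    & forall a x, I x -> I (a * x)].

Definition frac_deriv (A : idomainType) (d : A -> A) (f : {fraction A})
    : {fraction A} :=
  let r := repr f in
  let a := \n_r in let b := \d_r in
  tofrac (d a * b - a * d b) / tofrac (b * b).

Definition in_kspan (k : fieldType) (A : idomainType)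
    (phi : {rmorphism k -> A}) (vs : seq A) (x : A) : Prop :=
  exists cs : seq k, size cs = size vs /\
    x = \sum_(i < size vs) phi (nth 0 cs i) * nth 0 vs i.

From HB Require Import structures.
From mathcomp Require Import all_boot all_order all_algebra.
From mathcomp Require Import generic_quotient fraction.
From mathcomp Require Import ring.
From Stdlib Require Import Classical.
Set Implicit Arguments.
Unset Strict Implicit.
Unset Printing Implicit Defensive.
Import GRing.Theory.
Local Open Scope ring_scope.

(* Suppose every common constant of the delta_i in Frac(A) lies in k.  For
   v != 0 the map x |-> delta_i(x) v - x delta_i(v) kills v, is k-linear and
   sends delta-stable ideals into themselves; its vanishing for all i means
   that x/v is a constant, i.e. x is a k-multiple of v.  By induction on the
   number of spanning vectors of V this yields a single nonzero d lying in
   every delta-stable ideal that meets V nontrivially: either some of these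
   maps already lowers the dimension, or the ideal contains v.  Then d lies in
   the intersection of S, which is (0). *)

Lemma numden_reprE (A : idomainType) (f : {fraction A}) :
  tofrac \n_(repr f) / tofrac \d_(repr f) = f.
Proof.
have d_neq0 : tofrac \d_(repr f) != 0 by rewrite tofrac_eq0 denom_ratioP.
apply: (mulIf d_neq0); rewrite divfK //; apply/esym.
rewrite -[f in f * _]reprK /FracField.tofrac; unlock.
rewrite -[_ * _]FracField.pi_mul; apply/eqmodP => /=.
rewrite FracField.equivfE /FracField.mulf /=.
rewrite !numden_Ratio ?oner_neq0 ?mulf_neq0 ?denom_ratioP ?oner_neq0 //.
by rewrite !mulr1 mulrC.
Qed.

Section Wronskian.
Variables (A : idomainType) (d : A -> A).

Definition wronskian (v x : A) : A := d x * v - x * d v.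

Lemma wronskian_id v : wronskian v v = 0.
Proof. by rewrite /wronskian mulrC subrr. Qed.

Hypothesis dM : forall x y, d (x * y) = d x * y + x * d y.

(* The quotient rule does not depend on the representative of the fraction. *)
Lemma frac_derivE x v : v != 0 ->
  frac_deriv d (tofrac x / tofrac v) = tofrac (wronskian v x) / tofrac (v * v).
Proof.
move=> v_neq0; rewrite /frac_deriv.
have := numden_reprE (tofrac x / tofrac v).
set a := \n_ _; set b := \d_ _ => abE.
have b_neq0 : b != 0 := denom_ratioP _.
have avE : a * v = x * b.
  by apply/eqP; rewrite -tofrac_eq !tofracM -eqr_div ?tofrac_eq0 // abE.
have dE : d a * v + a * d v = d x * b + x * d b by rewrite -!dM avE.
apply/eqP; rewrite eqr_div ?tofrac_eq0 ?mulf_neq0 // -!tofracM tofrac_eq.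
rewrite /wronskian -subr_eq0; apply/eqP.
(* cross-multiplied difference, expressed through [avE] and its derivative [dE] *)
transitivity (b * v * (d a * v + a * d v - (d x * b + x * d b))
              - (v * d b + b * d v) * (a * v - x * b)); first by ring.
by rewrite dE avE !subrr mulr0 mulr0 subrr.
Qed.

End Wronskian.

Section Ideals.
Variable (A : idomainType) (I : A -> Prop).
Hypothesis I_ideal : is_ideal I.

Lemma idealMl a x : I x -> I (a * x).
Proof. by case: I_ideal => _ _; apply. Qed.

Lemma idealMr a x : I x -> I (x * a).
Proof. by rewrite mulrC; apply: idealMl. Qed.

Lemma idealB x y : I x -> I y -> I (x - y).
Proof.
case: I_ideal => _ ID _ Ix Iy; apply: ID => //.
by rewrite -mulN1r; apply: idealMl.
Qed.

Lemma ideal_prod n (F : 'I_n -> A) i : I (F i) -> I (\prod_(j < n) F j).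
Proof. by move=> IF; rewrite (bigD1 i) //=; apply: idealMr. Qed.

End Ideals.

Section Span.
Variables (k : fieldType) (A : idomainType) (phi : {rmorphism k -> A}).

Lemma in_kspan_nil x : in_kspan phi [::] x -> x = 0.
Proof. by case=> cs [_ ->]; rewrite big_ord0. Qed.

Lemma in_kspan_cons v vs x : in_kspan phi (v :: vs) x ->
  exists c r, x = phi c * v + r /\ in_kspan phi vs r.
Proof.
case=> [[|c cs]] [//= [cs_size] ->].
exists c, (\sum_(i < size vs) phi (nth 0 cs i) * nth 0 vs i).
by rewrite big_ord_recl; split; last by exists cs.
Qed.

Lemma in_kspan_map (f : A -> A) vs x :
  (forall x y, f (x + y) = f x + f y) ->
  (forall c x, f (phi c * x) = phi c * f x) ->
  in_kspan phi vs x -> in_kspan phi (map f vs) (f x).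
Proof.
move=> fD fZ [cs [cs_size ->]]; exists cs; rewrite size_map; split => //.
have f0 : f 0 = 0 by apply: (addrI (f 0)); rewrite -fD !addr0.
rewrite (big_morph f fD f0); apply: eq_bigr => i _.
by rewrite fZ (nth_map 0).
Qed.

End Span.

Section NoNewConstants.
Variables (k : fieldType) (A : idomainType) (phi : {rmorphism k -> A}).
Variables (m : nat) (delta : 'I_m -> A -> A).
Hypothesis delta_der : forall i, is_kderivation phi (delta i).

Definition is_delta_ideal (I : A -> Prop) :=
  is_ideal I /\ forall i x, I x -> I (delta i x).

Definition span_ideal_witness (vs : seq A) (d : A) :=
  forall I, is_delta_ideal I ->
  (exists2 x, x != 0 & in_kspan phi vs x /\ I x) -> I d.

Lemma wronskianD i v x y :
  wronskian (delta i) v (x + y) = wronskian (delta i) v x + wronskian (delta i) v y.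
Proof. by case: (delta_der i) => dD _ _; rewrite /wronskian dD; ring. Qed.

Lemma wronskianZ i v c x :
  wronskian (delta i) v (phi c * x) = phi c * wronskian (delta i) v x.
Proof. by case: (delta_der i) => _ dZ _; rewrite /wronskian dZ; ring. Qed.

Lemma delta_ideal_wronskian I i v x :
  is_delta_ideal I -> I x -> I (wronskian (delta i) v x).
Proof.
case=> I_ideal I_stable Ix.
by apply: idealB => //; apply: idealMr => //; apply: I_stable.
Qed.

Lemma span_ideal_witness_nil : span_ideal_witness [::] 1.
Proof. by move=> I _ [x x_neq0 [/in_kspan_nil x0 _]]; rewrite x0 eqxx in x_neq0. Qed.

Lemma span_ideal_witness_cons0 vs d :
  span_ideal_witness vs d -> span_ideal_witness (0 :: vs) d.
Proof.
move=> wd I I_delta [x x_neq0 [/in_kspan_cons [c [r [xE r_span]]] Ix]].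
by rewrite xE mulr0 add0r in x_neq0 Ix; apply: wd => //; exists r.
Qed.

Hypothesis no_new_constants : forall x v : A, v != 0 ->
  (forall i, wronskian (delta i) v x = 0) -> exists c, x = phi c * v.

Lemma span_ideal_witness_cons v vs (D : 'I_m -> A) : v != 0 ->
  (forall i, span_ideal_witness (map (wronskian (delta i) v) vs) (D i)) ->
  span_ideal_witness (v :: vs) (v * \prod_(i < m) D i).
Proof.
move=> v_neq0 wD I I_delta [x x_neq0 [/in_kspan_cons [c [r [xE r_span]]] Ix]].
have I_ideal := I_delta.1.
have wrE i : wronskian (delta i) v x = wronskian (delta i) v r.
  by rewrite xE wronskianD wronskianZ wronskian_id mulr0 add0r.
have [wr0 | /forallPn[i wr_neq0]] := boolP [forall i, wronskian (delta i) v r == 0].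
  have [e rE] : exists e, r = phi e * v.
    by apply: no_new_constants => // i; apply/eqP/(forallP wr0).
  have xE' : x = phi (c + e) * v by rewrite xE rE rmorphD mulrDl.
  have ce_neq0 : c + e != 0.
    by apply: contra x_neq0 => /eqP ce0; rewrite xE' ce0 rmorph0 mul0r.
  apply: idealMr => //.
  have -> : v = phi (c + e)^-1 * x by rewrite xE' mulrA -rmorphM mulVf // rmorph1 mul1r.
  exact: idealMl.
have I_Di : I (D i).
  apply: (wD i) => //; exists (wronskian (delta i) v r) => //.
  split; first exact: in_kspan_map (wronskianD i v) (wronskianZ i v) r_span.
  by rewrite -wrE; apply: delta_ideal_wronskian.
exact/(idealMl I_ideal)/(ideal_prod I_ideal I_Di).
Qed.

Lemma exists_span_ideal_witness vs : exists2 d, d != 0 & span_ideal_witness vs d.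
Proof.
elim: {vs}(size vs) {-2}vs (erefl (size vs)) => [|n IH] [|v vs] //= => [_ | [vs_size]].
  by exists 1; [exact: oner_neq0 | exact: span_ideal_witness_nil].
have [-> | v_neq0] := eqVneq v 0.
  have [d d_neq0 wd] := IH vs vs_size.
  by exists d => //; apply: span_ideal_witness_cons0.
have /(fin_all_exists2 (U := fun=> A)) [D D_neq0 wD] : forall i, exists2 D, D != 0 &
    span_ideal_witness (map (wronskian (delta i) v) vs) D.
  by move=> i; apply: IH; rewrite size_map.
exists (v * \prod_(i < m) D i); last exact: span_ideal_witness_cons.
by rewrite mulf_neq0 //; apply/prodf_neq0 => i _.
Qed.

End NoNewConstants.

Theorem lemma3p1 (k : fieldType) (A : idomainType) (phi : {rmorphism k -> A})
    (m : nat) (delta : 'I_m -> A -> A)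
    (Hder : forall i, is_kderivation phi (delta i))
    (vs : seq A) (S : (A -> Prop) -> Prop)
    (HSideal : forall I, S I -> is_ideal I)
    (Hstable : forall i I, S I -> forall x, I x -> I (delta i x))
    (Hcap : forall x, (forall I, S I -> I x) -> x = 0)
    (HV : forall I, S I -> exists2 x, x != 0 & in_kspan phi vs x /\ I x) :
  exists f : {fraction A},
    (~ exists c : k, f = tofrac (phi c)) /\
    (forall i, frac_deriv (delta i) f = 0).
Proof.
apply: NNPP => no_constant.
have no_new_constants (x v : A) : v != 0 ->
    (forall i, wronskian (delta i) v x = 0) -> exists c, x = phi c * v.
  move=> v_neq0 wr0.
  have [c xvE] : exists c, tofrac x / tofrac v = tofrac (phi c).
    apply: NNPP => not_const; apply: no_constant.
    exists (tofrac x / tofrac v); split => // i.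
    by rewrite frac_derivE ?wr0 ?tofrac0 ?mul0r //; case: (Hder i).
  by exists c; apply/eqP; rewrite -tofrac_eq tofracM -xvE divfK ?tofrac_eq0.
have [d d_neq0 wd] := exists_span_ideal_witness Hder no_new_constants vs.
move/eqP: d_neq0; apply; apply: Hcap => I SI.
by apply: wd (HV I SI); split=> [|i]; [exact: HSideal | exact: Hstable].
Qed.
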